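(* Let $n\geq 1$ be an integer, let $\Omega_s\subseteq[-1,1]$ be a Lebesgue measurable set of Lebesgue measure $s\geq 0$ such that $\zeta=\max\{|x|: x\in\Omega_s\}$ exists, and suppose $1-\zeta\geq 1/n$. Then for every real polynomial $p$ of degree $\leq n$, \[ \int_{\Omega_s}|p(x)|\,dx\leq\frac{s\,n^{3/2}}{(1-\zeta^2)^{1/4}}\int_{-1}^1|p(x)|\,dx . \] *)

From HB Require Import structures.
From mathcomp Require Import all_boot all_order all_algebra.
From mathcomp Require Import all_classical all_reals all_analysis.
Set Implicit Arguments. Unset Strict Implicit. Unset Printing Implicit Defensive.

From HB Require Import structures.
From mathcomp Require Import all_boot all_order all_algebra.
From mathcomp Require Import all_classical all_reals all_analysis.
From mathcomp Require Import ring lra zify.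
Import Order.TTheory GRing.Theory Num.Theory.
Import numFieldNormedType.Exports measurable_realfun.
Local Open Scope classical_set_scope.
Local Open Scope ring_scope.

(* Substituting x = cos t turns p(x) sqrt(1 - x^2) into the sine polynomial
   q(t) = p(cos t) sin t = sum_(k <= n) b_k sin((k+1) t), and the L1 norm of p
   on [-1, 1] into that of q on [0, pi].  By orthogonality, integrating q
   against the kernel sum_(k <= n) sin((k+1) t0) sin((k+1) t), which is bounded
   by n + 1, returns (pi/2) q(t0); hence
   |p(x)| sqrt(1 - x^2) <= 2 (n + 1) / pi * ||p||_1.  On Omega the weight
   sqrt(1 - x^2) is at least sqrt(1 - zeta^2), so integrating over Omega gives
   the claim with the constant 2 (n + 1) / (pi sqrt(1 - zeta^2)), which is at
   most n^(3/2) (1 - zeta^2)^(-1/4) when n >= 2.  For n = 1 the hypothesis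
   forces zeta = 0, and Omega is a null set. *)

Section segment_integrals.
Context {R : realType}.
Notation mu := (@lebesgue_measure R).
Implicit Types (f F : R -> R) (a b : R).

Lemma continuous_integrable_itv f a b :
  continuous f -> mu.-integrable `[a, b] (EFin \o f).
Proof.
move=> cf; apply: continuous_compact_integrable; first exact: segment_compact.
exact: continuous_subspaceT.
Qed.

Lemma is_derive_continuous {f F : R -> R} :
  (forall x : R, is_derive x (1 : R) F (f x)) -> continuous F.
Proof.
move=> dF x; apply/differentiable_continuous/derivable1_diffP.
exact: ex_derive.
Qed.

Lemma Rintegral_itv_primitive {f F : R -> R} {a b : R} :
  a < b -> continuous f -> (forall x : R, is_derive x (1 : R) F (f x)) ->
  \int[mu]_(x in `[a, b]) f x = F b - F a.
Proof.
move=> ab cf dF; have cF := is_derive_continuous dF.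
rewrite /Rintegral (@continuous_FTC2 _ f F a b ab) //.
- exact: continuous_subspaceT.
- split; [by move=> x _; exact: ex_derive | exact/cvg_at_right_filter/cF |
          exact/cvg_at_left_filter/cF].
- by move=> x _; rewrite derive1E derive_val.
Qed.

Lemma continuous_sum I (r : seq I) (f : I -> R -> R) :
  (forall i, continuous (f i)) -> continuous (fun x => \sum_(i <- r) f i x).
Proof.
move=> cf x; elim: r => [|i r IH].
  by under eq_fun do rewrite big_nil; exact: cst_continuous.
under eq_fun do rewrite big_cons.
by apply: continuousD; [exact: cf | exact: IH].
Qed.

Lemma continuous_normr {f} : continuous f -> continuous (fun x => `|f x|).
Proof.
by move=> cf x; apply: continuous_comp; [exact: cf | exact: norm_continuous].
Qed.

Lemma continuous_mulr_fun {f g} :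
  continuous f -> continuous g -> continuous (fun x => f x * g x).
Proof. by move=> cf cg x; apply: continuousM; [exact: cf | exact: cg]. Qed.

Lemma Rintegral_sum I (r : seq I) (f : I -> R -> R) a b :
  (forall i, continuous (f i)) ->
  \int[mu]_(x in `[a, b]) \sum_(i <- r) f i x =
  \sum_(i <- r) \int[mu]_(x in `[a, b]) f i x.
Proof.
move=> cf; elim: r => [|i r IH].
  under eq_Rintegral do rewrite big_nil.
  by rewrite Rintegral_cst // mul0r big_nil.
under eq_Rintegral do rewrite big_cons.
rewrite RintegralD //; first by rewrite IH big_cons.
  by apply: continuous_integrable_itv; exact: cf.
by apply: continuous_integrable_itv; exact: continuous_sum.
Qed.

Lemma integral_norm_le_measure {D : set R} {f} {M s : R} :
  measurable D -> continuous f -> mu D = s%:E ->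
  (forall x, D x -> `|f x| <= M) ->
  (\int[mu]_(x in D) (`|f x|)%:E <= (M * s)%:E)%E.
Proof.
move=> mD cf muD f_le; rewrite EFinM -muD -integral_cst //.
apply: ge0_le_integral => //.
apply/measurable_EFinP; apply: measurable_funTS.
by apply: continuous_measurable_fun; exact: continuous_normr.
Qed.

End segment_integrals.

Section sine_sums.
Context {R : realType}.
Notation mu := (@lebesgue_measure R).

Lemma sin_natr_mulpi (k : nat) : sin (k%:R * pi) = 0 :> R.
Proof.
elim: k => [|k IH]; first by rewrite mul0r sin0.
by rewrite -addn1 natrD mulrDl mul1r sinDpi IH oppr0.
Qed.

Lemma continuous_sin_mul (a : R) : continuous (fun x => sin (a * x)).
Proof.
move=> x; apply: continuous_comp; last exact: continuous_sin.
by apply: continuousM; [exact: cst_continuous | exact: cvg_id].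
Qed.

Lemma Rintegral_sin_mul_sin_eq0 (a b : R) : a ^+ 2 != b ^+ 2 ->
  sin (a * pi) = 0 -> sin (b * pi) = 0 ->
  \int[mu]_(x in `[0, pi]) (sin (a * x) * sin (b * x)) = 0.
Proof.
move=> ab sa sb.
pose F y := (a ^+ 2 - b ^+ 2)^-1 *
  (b * (sin (a * y) * cos (b * y)) - a * (cos (a * y) * sin (b * y))).
have dF x : is_derive x (1 : R) F (sin (a * x) * sin (b * x)).
  apply: is_derive_eq; rewrite /GRing.scale /= !mulr1.
  by field; rewrite subr_eq0.
rewrite (Rintegral_itv_primitive (@pi_gt0 R) _ dF); last first.
  by apply: continuous_mulr_fun; exact: continuous_sin_mul.
by rewrite /F !mulr0 sin0 sa sb !(mul0r, mulr0, subrr).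
Qed.

Lemma Rintegral_sin_mul_sin_self (a : R) : a != 0 -> sin (a * pi) = 0 ->
  \int[mu]_(x in `[0, pi]) (sin (a * x) * sin (a * x)) = pi / 2.
Proof.
move=> a0 sa.
pose F y := 2^-1 * y - (2 * a)^-1 * (sin (a * y) * cos (a * y)).
have dF x : is_derive x (1 : R) F (sin (a * x) * sin (a * x)).
  apply: is_derive_eq; rewrite /GRing.scale /= !mulr1.
  rewrite [RHS](_ : _ = 2^-1 * (cos (a * x) ^+ 2 + sin (a * x) ^+ 2) +
    2^-1 * (sin (a * x) ^+ 2 - cos (a * x) ^+ 2)); last by field.
  by rewrite cos2Dsin2; field.
rewrite (Rintegral_itv_primitive (@pi_gt0 R) _ dF); last first.
  by apply: continuous_mulr_fun; exact: continuous_sin_mul.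
by rewrite /F !mulr0 sin0 sa !(mul0r, mulr0, subr0) mulrC.
Qed.

Lemma Rintegral_sin_mul_sin (j k : nat) :
  \int[mu]_(x in `[0, pi]) (sin (j.+1%:R * x) * sin (k.+1%:R * x)) =
  if j == k then pi / 2 else 0.
Proof.
have [<-|jk] := eqVneq j k.
  by apply: Rintegral_sin_mul_sin_self; rewrite ?pnatr_eq0 ?sin_natr_mulpi.
apply: Rintegral_sin_mul_sin_eq0; rewrite ?sin_natr_mulpi //.
by rewrite -!natrX eqr_nat eqn_exp2r.
Qed.

Definition sinsum (b : nat -> R) (N : nat) (x : R) :=
  \sum_(k < N) b k * sin (k.+1%:R * x).

Lemma continuous_sinsum b N : continuous (sinsum b N).
Proof.
apply: continuous_sum => k; apply: continuous_mulr_fun.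
  exact: cst_continuous.
exact: continuous_sin_mul.
Qed.

Lemma Rintegral_sinsum_mul_sinsum b c N :
  \int[mu]_(x in `[0, pi]) (sinsum b N x * sinsum c N x) =
  pi / 2 * \sum_(k < N) b k * c k.
Proof.
have cterm (e : nat -> R) (k : nat) :
    continuous (fun x : R => e k * sin (k.+1%:R * x)).
  apply: continuous_mulr_fun; first exact: cst_continuous.
  exact: continuous_sin_mul.
under eq_Rintegral do rewrite /sinsum mulr_suml.
rewrite Rintegral_sum; last first.
  move=> k; apply: continuous_mulr_fun; first exact: cterm.
  exact: continuous_sinsum.
rewrite mulr_sumr; apply: eq_bigr => k _.
under eq_Rintegral do rewrite mulr_sumr.
rewrite Rintegral_sum; last by move=> j; exact: continuous_mulr_fun.
have term (j : 'I_N) : \int[mu]_(x in `[0, pi])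
    (b k * sin (k.+1%:R * x) * (c j * sin (j.+1%:R * x))) =
    b k * c j * (if k == j then pi / 2 else 0).
  under eq_Rintegral do rewrite mulrACA.
  rewrite RintegralZl ?Rintegral_sin_mul_sin //.
  apply/continuous_integrable_itv/continuous_mulr_fun;
  exact: continuous_sin_mul.
rewrite (bigD1 k) //= term eqxx big1 ?addr0; first by rewrite mulrC.
by move=> j /negPf jk; rewrite term eq_sym jk mulr0.
Qed.

Lemma norm_sinsum_le b N x : `|sinsum b N x| <= \sum_(k < N) `|b k|.
Proof.
apply: le_trans (ler_norm_sum _ _ _) _; apply: ler_sum => k _.
by rewrite normrM ler_piMr // sin_max.
Qed.

Lemma norm_sinsum_le_Rintegral b N t :
  pi / 2 * `|sinsum b N t| <= N%:R * \int[mu]_(x in `[0, pi]) `|sinsum b N x|.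
Proof.
(* By orthogonality K reproduces sine sums: \int_0^pi f K = pi / 2 * f t. *)
pose K := sinsum (fun k => sin (k.+1%:R * t)) N.
have K_le x : `|K x| <= N%:R.
  apply: le_trans (norm_sinsum_le _ _ _) _.
  apply: le_trans (_ : _ <= \sum_(k < N) (1 : R)) _.
    by apply: ler_sum => k _; exact: sin_max.
  by rewrite sumr_const card_ord.
have Kc : continuous (fun x => sinsum b N x * K x).
  by apply: continuous_mulr_fun; exact: continuous_sinsum.
rewrite -[pi / 2]ger0_norm ?divr_ge0 ?pi_ge0 // -normrM.
rewrite -[_ * sinsum b N t]/(pi / 2 * \sum_(k < N) b k * sin (k.+1%:R * t)).
rewrite -(Rintegral_sinsum_mul_sinsum b (fun k => sin (k.+1%:R * t)) N) -/K.
apply: le_trans (le_normr_Rintegral _ _) _ => //.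
  exact: continuous_integrable_itv.
rewrite -RintegralZl //; last first.
  by apply/continuous_integrable_itv/continuous_normr; exact: continuous_sinsum.
apply: le_Rintegral => //.
- exact/continuous_integrable_itv/continuous_normr.
- apply/continuous_integrable_itv/continuous_mulr_fun.
    exact: cst_continuous.
  exact/continuous_normr/continuous_sinsum.
by move=> x _; rewrite normrM mulrC ler_wpM2r.
Qed.

Definition is_sinsum N (f : R -> R) :=
  exists2 b : nat -> R, (forall k, (N <= k)%N -> b k = 0) & f =1 sinsum b N.

Lemma eq_is_sinsum {N} {f g : R -> R} :
  f =1 g -> is_sinsum N f -> is_sinsum N g.
Proof. by move=> fg [b b0 fb]; exists b => // x; rewrite -fg. Qed.

Lemma is_sinsum0 N : is_sinsum N (fun => 0).
Proof.
by exists (fun => 0) => // x; rewrite /sinsum big1 // => k _; rewrite mul0r.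
Qed.

Lemma is_sinsumD {N} {f g : R -> R} :
  is_sinsum N f -> is_sinsum N g -> is_sinsum N (fun x => f x + g x).
Proof.
move=> [b b0 fb] [c c0 gc]; exists (fun k => b k + c k).
  by move=> k Nk; rewrite b0 // c0 // addr0.
move=> x; rewrite /= fb gc /sinsum -big_split.
by apply: eq_bigr => k _; rewrite mulrDl.
Qed.

Lemma is_sinsum_sin N (c : R) : is_sinsum N.+1 (fun x => c * sin x).
Proof.
exists (fun k => if k == 0%N then c else 0); first by case.
move=> x; rewrite /sinsum big_ord_recl mul1r big1 ?addr0 // => k _.
by rewrite mul0r.
Qed.

Lemma cos_mul_sin_natr (k : nat) (x : R) :
  cos x * sin (k.+1%:R * x) = (sin (k.+2%:R * x) + sin (k%:R * x)) / 2.
Proof.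
have -> : k.+2%:R * x = k.+1%:R * x + x.
  by rewrite -[k.+2]addn1 natrD mulrDl mul1r.
have -> : k%:R * x = k.+1%:R * x - x.
  by rewrite -[k.+1]addn1 natrD mulrDl mul1r addrK.
by rewrite sinD sinB; field.
Qed.

Lemma is_sinsum_cos_mul {N} {f : R -> R} :
  is_sinsum N f -> is_sinsum N.+1 (fun x => cos x * f x).
Proof.
move=> [b b0 fb].
pose b_ (k : nat) := if k is k'.+1 then b k' else 0.
exists (fun k => (b_ k + b k.+1) / 2).
  by move=> [|k] // Nk; rewrite /b_ !b0 ?addr0 ?mul0r //; lia.
move=> x; rewrite fb /sinsum mulr_sumr.
have -> : \sum_(k < N) cos x * (b k * sin (k.+1%:R * x)) =
    (\sum_(k < N) b k * sin (k.+2%:R * x) +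
     \sum_(k < N) b k * sin (k%:R * x)) / 2.
  rewrite -big_split /= mulr_suml; apply: eq_bigr => k _.
  by rewrite mulrCA cos_mul_sin_natr; field.
have -> : \sum_(k < N.+1) (b_ k + b k.+1) / 2 * sin (k.+1%:R * x) =
    (\sum_(k < N.+1) b_ k * sin (k.+1%:R * x) +
     \sum_(k < N.+1) b k.+1 * sin (k.+1%:R * x)) / 2.
  by rewrite -big_split /= mulr_suml; apply: eq_bigr => k _; field.
congr (_ / 2); rewrite big_ord_recl /= /b_ mul0r add0r; congr (_ + _).
rewrite big_ord_recr /= b0 // mul0r addr0.
case: N b0 {fb} => [|N] b0; first by rewrite !big_ord0.
rewrite big_ord_recl /= mul0r sin0 mulr0 add0r.
under eq_bigr do rewrite /bump add1n.
by rewrite big_ord_recr /= b0 // mul0r addr0.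
Qed.

Lemma is_sinsum_horner_cos {p : {poly R}} {N} :
  (size p <= N)%N -> is_sinsum N (fun x => p.[cos x] * sin x).
Proof.
elim/poly_ind: p N => [|p c IH] N pN.
  by apply: eq_is_sinsum _ (is_sinsum0 N) => x; rewrite horner0 mul0r.
case: N pN => [|N] pN.
  move: pN; rewrite leqn0 size_poly_eq0 => /eqP ->.
  by apply: eq_is_sinsum _ (is_sinsum0 _) => x; rewrite horner0 mul0r.
have pN' : (size p <= N)%N.
  move: pN; rewrite size_MXaddC; case: eqP => [->|_] //=.
  by rewrite size_poly0.
have := is_sinsumD (is_sinsum_cos_mul (IH N pN')) (is_sinsum_sin N c).
apply: eq_is_sinsum.
by move=> x; rewrite /= hornerMXaddC; ring.
Qed.

End sine_sums.

Section chebyshev_estimates.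
Context {R : realType}.
Notation mu := (@lebesgue_measure R).

Lemma Rintegral_cos_subst (G : R -> R) : continuous G ->
  \int[mu]_(x in `[-1, 1]) G x = \int[mu]_(t in `[0, pi]) (G (cos t) * sin t).
Proof.
move=> cG; have dcos : cos^`()%classic = (fun t => - sin t) :> (R -> R).
  by apply/funext => t; rewrite derive1E derive_val.
have cNsin : continuous (fun t : R => - sin t).
  by move=> t; apply: continuousN; exact: continuous_sin.
rewrite /Rintegral.
have := @integration_by_substitution_decreasing R cos G 0 pi (@pi_ge0 R).
rewrite cospi cos0 dcos => ->.
- congr fine; apply: eq_integral => t _.
  by rewrite /= opprK.
- by move=> x y x0pi y0pi xy; rewrite ltr_cos.
- by move=> t _; exact: cNsin.
- by apply/cvg_ex; exists (- sin 0); exact/cvg_at_right_filter/cNsin.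
- by apply/cvg_ex; exists (- sin pi); exact/cvg_at_left_filter/cNsin.
- split; first by move=> t _; exact: ex_derive.
    exact/cvg_at_right_filter/continuous_cos.
  exact/cvg_at_left_filter/continuous_cos.
- exact: continuous_subspaceT.
Qed.

Lemma horner_mul_sqrt_le_Rintegral {p : {poly R}} {N x} :
  (size p <= N)%N -> -1 <= x <= 1 ->
  pi / 2 * (`|p.[x]| * Num.sqrt (1 - x ^+ 2)) <=
  N%:R * \int[mu]_(y in `[-1, 1]) `|p.[y]|.
Proof.
move=> pN x1.
have [b _ pb] := is_sinsum_horner_cos pN.
rewrite Rintegral_cos_subst; last exact/continuous_normr/continuous_horner.
have -> : `|p.[x]| * Num.sqrt (1 - x ^+ 2) = `|sinsum b N (acos x)|.
  rewrite -pb normrM acosK ?in_itv //= sin_acos //.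
  by rewrite [`|Num.sqrt _|]ger0_norm ?sqrtr_ge0.
suff -> : \int[mu]_(t in `[0, pi]) (`|p.[cos t]| * sin t) =
    \int[mu]_(t in `[0, pi]) `|sinsum b N t| by exact: norm_sinsum_le_Rintegral.
apply: eq_Rintegral => t; rewrite inE /= in_itv /= => t0pi.
by rewrite -pb normrM [`|sin t|]ger0_norm // sin_ge0_pi.
Qed.

Lemma norm_horner_le_Rintegral {p : {poly R}} {N} (x zeta : R) :
  (size p <= N)%N -> `|x| <= zeta -> zeta < 1 ->
  `|p.[x]| <= 2 * N%:R / (pi * Num.sqrt (1 - zeta ^+ 2)) *
              \int[mu]_(y in `[-1, 1]) `|p.[y]|.
Proof.
move=> pN x_zeta zeta_lt1.
have zeta_ge0 : 0 <= zeta := le_trans (normr_ge0 x) x_zeta.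
have x1 : -1 <= x <= 1 by rewrite -ler_norml (le_trans x_zeta (ltW zeta_lt1)).
have sqrt_gt0 : 0 < Num.sqrt (1 - zeta ^+ 2).
  by rewrite sqrtr_gt0 subr_gt0 expr_lt1.
have x2 : x ^+ 2 <= zeta ^+ 2.
  by rewrite -real_normK ?num_real // ler_pXn2r ?nnegrE.
have sqrt_le : Num.sqrt (1 - zeta ^+ 2) <= Num.sqrt (1 - x ^+ 2).
  rewrite ler_sqrt ?lerD2l ?lerN2 // subr_ge0 (le_trans x2) //.
  by rewrite expr_le1 // ltW.
have := horner_mul_sqrt_le_Rintegral pN x1 => p_x_le.
rewrite mulrAC ler_pdivlMr ?mulr_gt0 ?pi_gt0 //.
have := ler_wpM2l (mulr_ge0 (normr_ge0 p.[x]) (@pi_ge0 R)) sqrt_le.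
lra.
Qed.

End chebyshev_estimates.

Section numerical_bounds.
Context {R : realType}.
Notation mu := (@lebesgue_measure R).

Lemma pi_ge14_5 : 14 / 5 <= pi :> R.
Proof.
(* 0 <= \int_0^pi (sin x - 3/4)^2 dx = 17 pi / 16 - 3 *)
pose f (x : R) := (sin x - 3 / 4) * (sin x - 3 / 4).
pose F (x : R) :=
  2^-1 * x - 2^-1 * (sin x * cos x) + 3 / 2 * cos x + 9 / 16 * x.
have dF x : is_derive x (1 : R) F (f x).
  apply: is_derive_eq; rewrite /GRing.scale /= !mulr1.
  by rewrite -[cos x * cos x]expr2 cos2sin2 /f; field.
have cf : continuous f.
  have csin : continuous (fun x : R => sin x - 3 / 4).
    move=> x; apply: (@continuousB _ _ _ sin (fun=> 3 / 4)).
      exact: continuous_sin.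
    exact: cst_continuous.
  exact: continuous_mulr_fun.
have f_ge0 x : `[0, pi]%classic x -> 0 <= f x by rewrite /f -expr2 sqr_ge0.
have := Rintegral_ge0 mu f_ge0.
rewrite (Rintegral_itv_primitive (@pi_gt0 R) cf dF) /F sinpi cospi sin0 cos0.
by rewrite !(mul0r, mulr0, subr0, add0r, sub0r); have := @pi_ge2 R; lra.
Qed.

Lemma Schur_constant_le {n : nat} {z : R} : (2 <= n)%N -> 0 <= z ->
  1 / n%:R <= 1 - z ->
  2 * n.+1%:R / (pi * Num.sqrt (1 - z ^+ 2)) <=
  n%:R `^ (3 / 2) / (1 - z ^+ 2) `^ (1 / 4).
Proof.
move=> n2 z0 zn.
have n_ge2 : 2 <= n%:R :> R by rewrite ler_nat.
have n_gt0 : 0 < n%:R :> R by lra.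
have nz : 1 <= n%:R * (1 - z) by move: zn; rewrite ler_pdivrMr // mulrC.
set y := 1 - z ^+ 2.
have ny : 1 <= n%:R * y.
  have z1 : z <= 1 by nra.
  by apply: le_trans nz _; rewrite ler_pM2l // /y; nra.
have y_gt0 : 0 < y by nra.
set u := y `^ (1 / 4).
have u_gt0 : 0 < u by apply: powR_gt0.
have u4 : u ^+ 4 = y.
  rewrite /u -powR_mulrn ?powR_ge0 // -powRrM.
  by rewrite (_ : 1 / 4 * 4%:R = 1) ?powRr1 ?ltW //; field.
have sqrt_y : Num.sqrt y = u ^+ 2.
  rewrite /u -powR_mulrn ?powR_ge0 // -powRrM -powR12_sqrt ?ltW //.
  by congr (_ `^ _); field.
have n32 : n%:R `^ (3 / 2) = n%:R * Num.sqrt n%:R :> R.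
  rewrite (_ : 3 / 2 = 1 + 2^-1); last by field.
  by rewrite powRD ?powRr1 ?powR12_sqrt ?ltW ?gt_eqF ?implybT.
(* w := v * u satisfies w ^ 4 = n ^ 2 y >= n >= 2, hence w >= 15 / 14 and
   pi * w >= 3 >= 2 (n + 1) / n. *)
rewrite n32 sqrt_y; set v := Num.sqrt n%:R.
have v4 : v ^+ 4 = n%:R ^+ 2.
  by rewrite (_ : 4 = 2 * 2)%N // exprM sqr_sqrtr ?ltW.
have vu : 15 / 14 <= v * u.
  rewrite -(ler_pXn2r (_ : (0 < 4)%N)) ?nnegrE ?mulr_ge0 ?sqrtr_ge0 ?ltW //.
  rewrite [(v * u) ^+ 4]exprMn v4 u4; nra.
have pi_ge := pi_ge14_5.
rewrite ler_pdivrMr ?mulr_gt0 ?exprn_gt0 ?(lt_le_trans _ pi_ge) //.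
rewrite (_ : _ / u * _ = n%:R * (pi * (v * u))); last by field; rewrite gt_eqF.
have pi_vu : 3 <= pi * (v * u).
  apply: le_trans (ler_pM _ _ pi_ge vu); lra.
rewrite -natr1; nra.
Qed.

End numerical_bounds.

Theorem theoremA1 (R : realType) (n : nat) (Omega : set R) (s zeta : R)
  (p : {poly R}) :
  (1 <= n)%N ->
  measurable Omega ->
  Omega `<=` `[(-1)%R, 1%R]%classic ->
  (@lebesgue_measure R Omega = s%:E) ->
  (exists2 x, Omega x & `|x| = zeta) ->
  (forall x, Omega x -> `|x| <= zeta) ->
  1 / n%:R <= 1 - zeta ->
  (size p <= n.+1)%N ->
  (\int[@lebesgue_measure R]_(x in Omega) (`|p.[x]|)%:E <=
    (s * (n%:R `^ (3 / 2)) / ((1 - zeta ^+ 2) `^ (1 / 4)))%:E *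
    \int[@lebesgue_measure R]_(x in `[(-1)%R, 1%R]%classic) (`|p.[x]|)%:E)%E.
Proof.
(* The inclusion of Omega in [-1, 1] follows from |x| <= zeta < 1. *)
move=> n_ge1 mOmega _ Omega_s [x0 _ x0_zeta] zeta_max zeta_n p_n.
have zeta_ge0 : 0 <= zeta by rewrite -x0_zeta.
have zeta_lt1 : zeta < 1.
  by rewrite -subr_gt0 (lt_le_trans _ zeta_n) ?divr_gt0 ?ltr0n.
set I := \int[lebesgue_measure]_(x in `[-1, 1]) `|p.[x]|.
have -> : (\int[lebesgue_measure]_(x in `[(-1)%R, 1%R]) (`|p.[x]|)%:E)%E = I%:E.
  rewrite /I /Rintegral fineK //; apply: integrable_fin_num => //.
  exact/continuous_integrable_itv/continuous_normr/continuous_horner.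
set c := 2 * n.+1%:R / (pi * Num.sqrt (1 - zeta ^+ 2)).
have p_le x : Omega x -> `|p.[x]| <= c * I.
  by move=> Ox; exact: norm_horner_le_Rintegral p_n (zeta_max x Ox) zeta_lt1.
have := integral_norm_le_measure mOmega (@continuous_horner _ p) Omega_s p_le.
move=> /le_trans; apply.
rewrite -EFinM lee_fin.
have s_ge0 : 0 <= s by rewrite -lee_fin -Omega_s measure_ge0.
have I_ge0 : 0 <= I by apply: Rintegral_ge0 => x _.
have [n_ge2 | n_le1] := ltnP 1 n.
  have := Schur_constant_le n_ge2 zeta_ge0 zeta_n; rewrite -/c => c_le.
  by have := ler_wpM2r (mulr_ge0 I_ge0 s_ge0) c_le; nra.
suff -> : s = 0 by rewrite !(mulr0, mul0r).
have zeta0 : zeta = 0.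
  by move: zeta_n; rewrite (_ : n = 1)%N ?divr1; [lra | lia].
apply: EFin_inj; rewrite -Omega_s.
apply: (@subset_measure0 _ _ _ lebesgue_measure _ [set 0] mOmega).
- exact: measurable_set1.
- by move=> x /zeta_max; rewrite zeta0 normr_le0 => /eqP.
- exact: lebesgue_measure_set1.
Qed.
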